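(* Let $a,n\in\mathbb{Z}^+$ with $a>1$. Then $$\sqrt[n]{a} = \lim_{k\to\infty}\frac{(k^{kn}+1)^{kn+1}\bmod (k^{kn^2}-a)}{(k^{kn}+1)^{kn}\bmod (k^{kn^2}-a)} - 1\quad\text{(in }\mathbb{R}),$$ where the limit is over positive integers $k$.
   Context: For integers, $u\bmod m$ denotes the least non-negative remainder of $u$ upon division by $m>0$. $\sqrt[n]{a}$ denotes the positive real $n$-th root of $a$. *)

From HB Require Import structures.
From mathcomp Require Import all_boot all_order all_algebra.
From mathcomp Require Import all_classical all_reals all_analysis.
Set Implicit Arguments. Unset Strict Implicit. Unset Printing Implicit Defensive.
Import Order.TTheory GRing.Theory Num.Theory.
Local Open Scope ring_scope.

Definition modulus6p2 (a n k : nat) : int := (k%:Z) ^+ (k * n ^ 2) - a%:Z.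

(* (k^(k n) + 1)^e  mod  (k^(k n^2) - a), least non-negative remainder (intdiv's modz) *)
Definition term6p2 (a n k e : nat) : int :=
  ((((k%:Z) ^+ (k * n) + 1) ^+ e) %% modulus6p2 a n k)%Z.

Definition seq6p2 (R : realType) (a n : nat) (k : nat) : R :=
  (term6p2 a n k (k * n + 1))%:~R / (term6p2 a n k (k * n))%:~R - 1.

From HB Require Import structures.
From mathcomp Require Import all_boot all_order all_algebra.
From mathcomp Require Import all_classical all_reals all_analysis.
From mathcomp Require Import ring lra zify.
Import Order.TTheory GRing.Theory Num.Theory numFieldNormedType.Exports.
Local Open Scope ring_scope.
Local Open Scope classical_set_scope.

(* Write n = n'.+1 and N = k ^ (k n), so that the modulus is N ^ n - a.  Reducing (1 + X) ^ e
   modulo X ^ n - a gives coefficients 0 <= c_(e,r) <= (a + 1) ^ e; for e <= k n + 1 these are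
   much smaller than N, so the least remainder of (N + 1) ^ e is exactly sum_r c_(e,r) N ^ r,
   and it is c_(e,n') N ^ n' up to a relative error O(n (a + 1) ^ (k n + 1) / N) -> 0.
   With alpha ^ n = a, the weights c_(e,r) alpha ^ r / (1 + alpha) ^ e form a probability
   vector on the residues mod n, and one step e -> e + 1 replaces each weight by the average of
   itself and its cyclic predecessor, with weights 1 / (1 + alpha) and alpha / (1 + alpha).
   Such averaging shrinks the oscillation geometrically, so every weight tends to 1 / n; hence
   c_(e+1,n') / c_(e,n') -> 1 + alpha and the ratio of consecutive remainders minus 1 tends to
   alpha. *)

(* [redcoef a n' e r] is the coefficient of [X ^ r] in the reduction of
   [(1 + X) ^ e] modulo [X ^ n'.+1 - a], for [r <= n']. *)
Fixpoint redcoef (a n' e r : nat) : nat :=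
  match e with
  | 0 => (r == 0)%N
  | e'.+1 => (redcoef a n' e' r +
              if r is r'.+1 then redcoef a n' e' r' else a * redcoef a n' e' n')%N
  end.

Section ReducedBinomial.
Variables (a n' : nat).

Local Notation redpoly e x := (\sum_(r < n'.+1) (redcoef a n' e r)%:R * x ^+ r).

Lemma redpoly0 (R : pzSemiRingType) (x : R) : redpoly 0 x = 1.
Proof. by rewrite big_ord_recl expr0 mulr1 big1 ?addr0 // => i _; rewrite mul0r. Qed.

Lemma redpolyS (R : comPzRingType) e (x : R) :
  redpoly e.+1 x = (1 + x) * redpoly e x - (redcoef a n' e n')%:R * (x ^+ n'.+1 - a%:R).
Proof.
set c := redcoef a n' e.
have -> : redpoly e.+1 x = (c 0)%:R + a%:R * (c n')%:R +
    \sum_(i < n') ((c i.+1)%:R * x ^+ i.+1 + (c i)%:R * x ^+ i.+1).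
  rewrite big_ord_recl /= expr0 mulr1 natrD natrM; congr (_ + _).
  by apply: eq_bigr => i _; rewrite natrD mulrDl.
have shift : x * redpoly e x =
    \sum_(i < n') (c i)%:R * x ^+ i.+1 + (c n')%:R * x ^+ n'.+1.
  rewrite big_distrr big_ord_recr /= exprS mulrCA; congr (_ + _).
  by apply: eq_bigr => i _; rewrite exprS mulrCA.
rewrite mulrDl mul1r shift big_ord_recl /= expr0 mulr1 big_split /=; ring.
Qed.

Lemma redpoly_root (R : comPzRingType) e (x : R) :
  x ^+ n'.+1 = a%:R -> redpoly e x = (1 + x) ^+ e.
Proof.
move=> xa; elim: e => [|e IHe]; first by rewrite redpoly0 expr0.
by rewrite redpolyS IHe xa subrr mulr0 subr0 exprS.
Qed.

Lemma redpoly_eqmod (R : comPzRingType) e (x : R) :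
  exists q, (1 + x) ^+ e = redpoly e x + q * (x ^+ n'.+1 - a%:R).
Proof.
elim: e => [|e [q IHe]]; first by exists 0; rewrite redpoly0 expr0 mul0r addr0.
by exists ((redcoef a n' e n')%:R + (1 + x) * q); rewrite redpolyS exprS IHe; ring.
Qed.

Lemma redcoef_le e r : (1 <= a)%N -> (redcoef a n' e r <= (a + 1) ^ e)%N.
Proof.
move=> a_ge1; elim: e r => [|e IHe] r /=; first by case: (r == 0)%N.
have := IHe r; have := IHe n'; case: r => [|r] /=; last have := IHe r; rewrite expnS; nia.
Qed.

End ReducedBinomial.

Section BoundedDigits.
Variables (c : nat -> nat) (B : nat).
Hypothesis c_le : forall r, (c r <= B)%N.

Lemma sum_bounded_coef_le (R : realDomainType) m (x : R) : 1 <= x ->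
  \sum_(r < m) (c r)%:R * x ^+ r <= (m * B)%:R * x ^+ m.-1.
Proof.
move=> x_ge1; apply: (@le_trans _ _ (\sum_(r < m) B%:R * x ^+ m.-1)).
  apply: ler_sum => i _; apply: ler_pM => //.
  - by apply: exprn_ge0; apply: le_trans x_ge1.
  - by rewrite ler_nat.
  - by apply: ler_weXn2l => //; rewrite -ltnS prednK // (leq_trans _ (ltn_ord i)).
by rewrite sumr_const card_ord natrM -mulrA !mulr_natl.
Qed.

Lemma sum_bounded_coef_lt (R : realDomainType) a n' (x : R) :
  1 <= x -> (n'.+1 * B + a)%:R < x ->
  \sum_(r < n'.+1) (c r)%:R * x ^+ r < x ^+ n'.+1 - a%:R.
Proof.
move=> x_ge1 x_big; apply: le_lt_trans (@sum_bounded_coef_le _ _ _ x_ge1) _.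
rewrite natrD in x_big; rewrite exprS /=.
have P_ge1 : 1 <= x ^+ n' by apply: exprn_ege1.
have h1 : 0 < (x - (n'.+1 * B)%:R - a%:R) * x ^+ n' by apply: mulr_gt0; lra.
have h2 : 0 <= a%:R * (x ^+ n' - 1) by rewrite mulr_ge0 ?ler0n ?subr_ge0.
lra.
Qed.

Lemma sum_bounded_coef_lead (R : realFieldType) n' (x : R) : 1 <= x ->
  0 <= (\sum_(r < n'.+1) (c r)%:R * x ^+ r) / x ^+ n' - (c n')%:R <= (n' * B)%:R / x.
Proof.
move=> x_ge1; have x_gt0 : 0 < x by lra.
have P_gt0 : 0 < x ^+ n' by apply: exprn_gt0.
rewrite big_ord_recr /= mulrDl mulfK ?gt_eqF // addrK.
have low_ge0 : 0 <= \sum_(i < n') (c i)%:R * x ^+ i.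
  by apply: sumr_ge0 => i _; rewrite mulr_ge0 ?exprn_ge0 ?ler0n // ltW.
rewrite divr_ge0 ?(ltW P_gt0) //=.
rewrite ler_pdivrMr // mulrAC ler_pdivlMr //.
apply: le_trans (ler_wpM2r (ltW x_gt0) (@sum_bounded_coef_le _ _ _ x_ge1)) _.
case: n' P_gt0 low_ge0 => [|n'] _ _; first by rewrite !mul0n mul0r mul0r.
by rewrite -mulrA -exprSr.
Qed.

End BoundedDigits.

Section CyclicAveraging.
Variables (R : archiRealFieldType) (p q : R) (n' : nat) (F : nat -> nat -> R).
Hypotheses (p_gt0 : 0 < p) (q_gt0 : 0 < q) (pq1 : p + q = 1).
Hypothesis F_step : forall e r, F e.+1 r = p * F e r + q * F e (r + n').
Hypothesis F_periodic : forall e r, F e (r + n'.+1) = F e r.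

Local Notation bounded e m M := (forall r, m <= F e r <= M).

Lemma bounded_step e (m M : R) : bounded e m M -> bounded e.+1 m M.
Proof.
move=> hF r; rewrite F_step.
have /andP[lo1 hi1] := hF r; have /andP[lo2 hi2] := hF (r + n')%N.
have h1 : 0 <= p * (F e r - m) by rewrite mulr_ge0 ?subr_ge0 // ltW.
have h2 : 0 <= q * (F e (r + n')%N - m) by rewrite mulr_ge0 ?subr_ge0 // ltW.
have h3 : 0 <= p * (M - F e r) by rewrite mulr_ge0 ?subr_ge0 // ltW.
have h4 : 0 <= q * (M - F e (r + n')%N) by rewrite mulr_ge0 ?subr_ge0 // ltW.
have q_def : q = 1 - p by rewrite -pq1 addrC addKr.
rewrite q_def in h2 h4 *; apply/andP; split; nra.
Qed.

Lemma bounded_iter e t (m M : R) : bounded e m M -> bounded (e + t) m M.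
Proof. by move=> hF; elim: t => [|t IHt]; rewrite ?addn0 // addnS; apply: bounded_step. Qed.

Lemma F_mod e r : F e r = F e (r %% n'.+1).
Proof.
rewrite {1}(divn_eq r n'.+1); elim: (r %/ n'.+1)%N => [|k IHk]; first by rewrite add0n.
by rewrite mulSnr addnAC F_periodic.
Qed.

Lemma lower_lift_step e (m M g : R) s t : 0 <= g -> bounded e m M ->
    (forall j, (s <= j <= s + t)%N -> m + g <= F e j) ->
  forall j, (s <= j <= s + t.+1)%N -> m + g * (p * q) <= F e.+1 j.
Proof.
move=> g_ge0 hF high j /andP[sj jst]; rewrite F_step.
have /andP[lo1 _] := hF j; have /andP[lo2 _] := hF (j + n')%N.
have q_def : q = 1 - p by rewrite -pq1 addrC addKr.
have [p_ge0 q_ge0] := (ltW p_gt0, ltW q_gt0).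
case: (leqP j (s + t)) => [jst' | jst'].
- have := high j; rewrite sj jst' => /(_ isT) hj.
  have h1 : 0 <= p * (F e j - m - g) by apply: mulr_ge0 => //; lra.
  have h2 : 0 <= q * (F e (j + n')%N - m) by apply: mulr_ge0 => //; lra.
  have h3 : 0 <= g * p ^+ 2 by rewrite mulr_ge0 ?exprn_ge0.
  rewrite q_def in h2 *; nra.
- have ej : j = (s + t).+1 by apply/eqP; rewrite eqn_leq jst' -addnS jst.
  subst j.
  have := high (s + t)%N; rewrite leq_addr leqnn => /(_ isT).
  rewrite -F_periodic addnS -addSn => hj.
  have h2 : 0 <= q * (F e ((s + t).+1 + n') - m - g) by apply: mulr_ge0 => //; lra.
  have h3 : 0 <= g * q ^+ 2 by rewrite mulr_ge0 ?exprn_ge0.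
  rewrite q_def in h2 h3 *; nra.
Qed.

Lemma lower_lift e (m M g : R) s t : 0 <= g -> bounded e m M -> m + g <= F e s ->
  forall j, (s <= j <= s + t)%N -> m + g * (p * q) ^+ t <= F (e + t) j.
Proof.
move=> g_ge0 hF hs; elim: t => [|t IHt] j.
  rewrite !addn0 expr0 mulr1 -eqn_leq => /eqP <-; exact: hs.
rewrite [(e + _)%N]addnS exprSr [g * _]mulrA.
apply: (@lower_lift_step (e + t) m M (g * (p * q) ^+ t) s t _ (bounded_iter _ _ _ _ hF) IHt).
by rewrite mulr_ge0 // exprn_ge0 // mulr_ge0 // ltW.
Qed.

Local Notation theta := (1 - (p * q) ^+ n'.+1 / 2).

Lemma pq_pow_gt0_le1 : 0 < (p * q) ^+ n'.+1 <= 1.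
Proof.
have [p_le1 q_le1] : p <= 1 /\ q <= 1 by move: pq1 p_gt0 q_gt0; split; lra.
have pq_le1 : p * q <= 1 by rewrite mulr_ile1 // ltW.
by rewrite exprn_gt0 ?mulr_gt0 //= exprn_ile1 // mulr_ge0 // ltW.
Qed.

Lemma theta_ge0 : 0 <= theta.
Proof. by have /andP[_ h] := pq_pow_gt0_le1; lra. Qed.

Lemma theta_lt1 : theta < 1.
Proof. by have /andP[h _] := pq_pow_gt0_le1; lra. Qed.

(* A value in the upper half of [m, m + d] pushes its cyclic successors above m by a factor
   p q per step, reaching every residue within n'.+1 steps; otherwise all values stay in the
   lower half. *)
Lemma oscillation_contract e (m d : R) : 0 <= d -> bounded e m (m + d) ->
  exists m', bounded (e + n'.+1) m' (m' + theta * d).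
Proof.
move=> d_ge0 hF; have /andP[b_gt0 b_le1] := pq_pow_gt0_le1.
have [/existsP[s hs] | /existsP no_high] := boolP [exists s : 'I_n'.+1, m + d / 2 <= F e s].
  exists (m + d / 2 * (p * q) ^+ n'.+1) => r.
  have -> : m + d / 2 * (p * q) ^+ n'.+1 + theta * d = m + d by field.
  have /andP[_ ->] := bounded_iter _ n'.+1 _ _ hF r; rewrite andbT F_mod.
  have hlift := lower_lift _ _ _ (d / 2) s n'.+1 (divr_ge0 d_ge0 (ler0n _ 2)) hF hs.
  have r_lt : (r %% n'.+1 < n'.+1)%N by rewrite ltn_mod.
  case: (leqP s (r %% n'.+1)) => [sr | rs].
    by apply: hlift; rewrite sr (leq_trans (ltnW r_lt)) // leq_addl.
  rewrite -F_periodic; apply: hlift.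
  by rewrite leq_add2r (ltnW rs) (leq_trans (ltnW (ltn_ord s))) // leq_addl.
exists m => r.
have hF' : bounded e m (m + d / 2).
  move=> r'; have /andP[lo _] := hF r'; rewrite lo /= F_mod.
  rewrite leNgt; apply/negP => h; apply: no_high.
  by exists (Ordinal (ltn_pmod r' (ltn0Sn n'))); apply: ltW.
have /andP[-> hi] := bounded_iter _ n'.+1 _ _ hF' r.
apply: le_trans hi _; rewrite lerD2l.
have : 0 <= d * (1 - (p * q) ^+ n'.+1) by rewrite mulr_ge0 // subr_ge0.
lra.
Qed.

Lemma oscillation_geometric k : bounded 0 0 1 ->
  exists m, bounded (k * n'.+1) m (m + theta ^+ k).
Proof.
move=> F0; elim: k => [|k [m hm]]; first by exists 0; rewrite mul0n expr0 add0r.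
have [m' hm'] := oscillation_contract _ _ _ (exprn_ge0 k theta_ge0) hm.
by exists m'; rewrite mulSnr exprS.
Qed.

Lemma bounded_near_mean e (m d : R) : \sum_(r < n'.+1) F e r = 1 ->
  bounded e m (m + d) -> bounded e (n'.+1%:R^-1 - d) (n'.+1%:R^-1 + d).
Proof.
move=> F_sum hF r; have /andP[lo hi] := hF r.
have n_gt0 : 0 < n'.+1%:R :> R by rewrite ltr0n.
have mean_lo : m <= n'.+1%:R^-1.
  rewrite -[n'.+1%:R^-1]mul1r ler_pdivlMr // mulr_natr -F_sum.
  rewrite -[n'.+1 in X in X <= _]card_ord -sumr_const.
  by apply: ler_sum => i _; case/andP: (hF i).
have mean_hi : n'.+1%:R^-1 <= m + d.
  rewrite -[n'.+1%:R^-1]mul1r ler_pdivrMr // mulr_natr -F_sum.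
  rewrite -[n'.+1 in X in _ <= X]card_ord -sumr_const.
  by apply: ler_sum => i _; case/andP: (hF i).
move: mean_lo mean_hi; set mu := n'.+1%:R^-1 => ? ?.
apply/andP; split; lra.
Qed.

Lemma cvg_mean : (forall e, \sum_(r < n'.+1) F e r = 1) -> bounded 0 0 1 ->
  forall j r, F (k * n'.+1 + j)%N r @[k --> \oo] --> (n'.+1%:R^-1 : R).
Proof.
move=> F_sum F0 j r.
have theta_k : theta ^+ k @[k --> \oo] --> 0.
  by apply: cvg_expr; rewrite ger0_norm ?theta_ge0 ?theta_lt1.
apply: (@squeeze_cvgr _ _ _ _ (fun k => n'.+1%:R^-1 - theta ^+ k)
                              (fun k => n'.+1%:R^-1 + theta ^+ k)).
- apply: nearW => k; have [m hm] := oscillation_geometric k F0.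
  exact: bounded_near_mean (F_sum _) (bounded_iter _ j _ _ hm) r.
- by rewrite -[X in _ --> X]subr0; apply: cvgB => //; apply: cvg_cst.
- by rewrite -[X in _ --> X]addr0; apply: cvgD => //; apply: cvg_cst.
Qed.

End CyclicAveraging.

Section BaseGrowth.
Variables (a n k : nat).
Hypotheses (n_gt0 : (0 < n)%N) (k_large : (2 * a + 2 <= k)%N).

Lemma base_dominates : ((2 * (a + 1)) ^ (k * n) <= k ^ (k * n))%N.
Proof. by rewrite leq_exp2r ?muln_gt0 ?n_gt0 ?andbT; lia. Qed.

Lemma coef_bound_lt_base : (n * (a + 1) ^ (k * n + 1) + a < k ^ (k * n))%N.
Proof.
have := base_dominates; rewrite expnMn !addn1 expnSr.
have E_large : (n * (a + 1) < k * n)%N by nia.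
have E_lt : (k * n < 2 ^ (k * n))%N by apply: ltn_expl.
have a_lt : (a < (a + 1) ^ (k * n))%N.
  have E_ge1 : (1 <= k * n)%N by rewrite muln_gt0 n_gt0 andbT; lia.
  have := leq_pexp2l (ltn0Sn a) E_ge1; rewrite expn1 addn1; exact.
nia.
Qed.

Lemma coef_bound_le_base : ((a + 1) ^ (k * n + 1) * 2 ^ k <= (a + 1) * k ^ (k * n))%N.
Proof.
have pow2_le : (2 ^ k <= 2 ^ (k * n))%N by rewrite leq_pexp2l // leq_pmulr.
rewrite [(k * n + 1)%N]addn1 expnSr -mulnA.
apply: leq_trans (leq_mul (leqnn _) (leq_mul (leqnn _) pow2_le)) _.
by rewrite mulnCA leq_mul2l -expnMn mulnC base_dominates orbT.
Qed.

End BaseGrowth.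

Lemma term6p2_redpoly a n' k e :
  (1 <= a)%N -> (2 * a + 2 <= k)%N -> (e <= k * n'.+1 + 1)%N ->
  term6p2 a n'.+1 k e =
  \sum_(r < n'.+1) (redcoef a n' e r)%:R * (k ^ (k * n'.+1))%:R ^+ r.
Proof.
move=> a_ge1 k_large e_le; set x : int := (k ^ (k * n'.+1))%:R.
have x_ge1 : 1 <= x by rewrite /x natz lez_nat expn_gt0; apply/orP; left; lia.
have c_le r : (redcoef a n' e r <= (a + 1) ^ (k * n'.+1 + 1))%N.
  by apply: leq_trans (redcoef_le _ _ _ _ a_ge1) (leq_pexp2l _ e_le); rewrite addn1.
have x_large : ((n'.+1 * (a + 1) ^ (k * n'.+1 + 1) + a)%:R < x).
  by rewrite /x !natz ltz_nat; apply: coef_bound_lt_base.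
rewrite /term6p2 /modulus6p2.
have -> : (k%:Z) ^+ (k * n'.+1 ^ 2) - a%:Z = x ^+ n'.+1 - a%:R.
  by rewrite /x natrX -exprM -mulnA mulnn !natz.
have -> : (k%:Z) ^+ (k * n'.+1) + 1 = 1 + x by rewrite addrC /x natrX natz.
have [q ->] := redpoly_eqmod a n' _ e x.
rewrite addrC modzMDl modz_small //.
rewrite sumr_ge0 => [|i _]; last by rewrite mulr_ge0 ?ler0n // exprn_ge0.
exact: sum_bounded_coef_lt c_le _ _ _ _ x_ge1 x_large.
Qed.

Lemma cvg_coef_over_base (R : archiRealFieldType) a n : (0 < n)%N ->
  ((a + 1) ^ (k * n + 1))%:R / (k ^ (k * n))%:R @[k --> \oo] --> (0 : R).
Proof.
move=> n_gt0; have half_k : (2^-1 : R) ^+ k @[k --> \oo] --> 0.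
  by apply: cvg_expr; rewrite ger0_norm ?invr_ge0 // invf_lt1 // ltr1n.
apply: (@squeeze_cvgr _ _ _ _ (fun=> 0) (fun k => (a + 1)%:R * (2^-1) ^+ k)).
- near=> k; have k_large : (2 * a + 2 <= k)%N by near: k; exists (2 * a + 2)%N.
  have K_gt0 : 0 < (k ^ (k * n))%:R :> R by rewrite ltr0n expn_gt0; apply/orP; left; lia.
  rewrite divr_ge0 ?ler0n //= ler_pdivrMr // exprVn mulrAC ler_pdivlMr ?exprn_gt0 //.
  by rewrite -natrX -!natrM ler_nat coef_bound_le_base.
- exact: cvg_cst.
- by rewrite -(mulr0 (a + 1)%:R); apply: cvgMl_tmp.
Unshelve. all: end_near.
Qed.

Lemma modn_add_pred n' r :
  ((r + n') %% n'.+1 = if r %% n'.+1 is j.+1 then j else n')%N.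
Proof.
rewrite -modnDml; have := ltn_pmod r (ltn0Sn n').
case: (r %% n'.+1)%N => [|j] j_lt; first by rewrite add0n modn_small.
by rewrite addSnnS modnDr modn_small // ltnW.
Qed.

Section RootApproximation.
Variables (R : realType) (a n' : nat) (al : R).
Hypotheses (a_ge1 : (1 <= a)%N) (al_gt0 : 0 < al) (al_root : al ^+ n'.+1 = a%:R).

Definition redweight e r : R :=
  (redcoef a n' e (r %% n'.+1))%:R * al ^+ (r %% n'.+1) / (1 + al) ^+ e.

Lemma redweight_step e r :
  redweight e.+1 r = (1 + al)^-1 * redweight e r + al / (1 + al) * redweight e (r + n').
Proof.
have al1_neq0 : 1 + al != 0 by rewrite gt_eqF // addr_gt0.
rewrite /redweight modn_add_pred; case: (r %% n'.+1)%N => [|j] /=.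
  by rewrite natrD natrM -al_root !exprS; field; rewrite al1_neq0 expf_neq0.
by rewrite natrD !exprS; field; rewrite al1_neq0 expf_neq0.
Qed.

Lemma redweight_periodic e r : redweight e (r + n'.+1) = redweight e r.
Proof. by rewrite /redweight modnDr. Qed.

Lemma redweight_sum e : \sum_(r < n'.+1) redweight e r = 1.
Proof.
under eq_bigr => i _ do rewrite /redweight (modn_small (ltn_ord i)).
by rewrite -mulr_suml redpoly_root // divff // expf_neq0 // gt_eqF // addr_gt0.
Qed.

Lemma redweight0 r : 0 <= redweight 0 r <= 1.
Proof.
rewrite /redweight expr0 divr1; case: (r %% n'.+1)%N => [|j] /=.
  by rewrite expr0 mulr1 ler01 lexx.
by rewrite mul0r lexx ler01.
Qed.

Lemma cvg_redweight j : redweight (k * n'.+1 + j) n' @[k --> \oo] --> (n'.+1%:R^-1 : R).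
Proof.
have al1_gt0 : 0 < 1 + al by rewrite addr_gt0.
have weights_sum1 : (1 + al)^-1 + al / (1 + al) = 1.
  by field; rewrite gt_eqF.
apply: (cvg_mean _ _ _ _ _ _ _ weights_sum1 redweight_step redweight_periodic
         redweight_sum redweight0).
- by rewrite invr_gt0.
- by rewrite divr_gt0.
Qed.

Definition normrem k e : R :=
  (\sum_(r < n'.+1) (redcoef a n' e r)%:R * (k ^ (k * n'.+1))%:R ^+ r) /
  ((k ^ (k * n'.+1))%:R ^+ n' * (1 + al) ^+ e).

Lemma normrem_redweight k e : (0 < k)%N -> (e <= k * n'.+1 + 1)%N ->
  0 <= normrem k e - redweight e n' / al ^+ n' <=
    (n' * (a + 1) ^ (k * n'.+1 + 1))%:R / (k ^ (k * n'.+1))%:R.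
Proof.
move=> k_gt0 e_le; set x : R := (k ^ (k * n'.+1))%:R.
have x_ge1 : 1 <= x by rewrite ler1n expn_gt0 k_gt0.
have c_le r : (redcoef a n' e r <= (a + 1) ^ (k * n'.+1 + 1))%N.
  by apply: leq_trans (redcoef_le _ _ _ _ a_ge1) (leq_pexp2l _ e_le); rewrite addn1.
have /andP[lo hi] := @sum_bounded_coef_lead _ _ c_le R n' x x_ge1.
have pow_ge1 : 1 <= (1 + al) ^+ e by rewrite exprn_ege1 // lerDl ltW.
have -> : normrem k e - redweight e n' / al ^+ n' =
    ((\sum_(r < n'.+1) (redcoef a n' e r)%:R * x ^+ r) / x ^+ n' - (redcoef a n' e n')%:R)
    / (1 + al) ^+ e.
  rewrite /normrem /redweight modn_small //; field.
  by rewrite !expf_neq0 ?gt_eqF ?addr_gt0 // (lt_le_trans ltr01 x_ge1).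
rewrite divr_ge0 ?(le_trans ler01 pow_ge1) //=.
apply: le_trans hi; rewrite ler_pdivrMr ?(lt_le_trans ltr01 pow_ge1) //.
by rewrite ler_peMr.
Qed.

Lemma cvg_normrem j : (j <= 1)%N ->
  normrem k (k * n'.+1 + j) @[k --> \oo] --> n'.+1%:R^-1 / al ^+ n'.
Proof.
move=> j_le1.
have err_cvg : normrem k (k * n'.+1 + j) - redweight (k * n'.+1 + j) n' / al ^+ n'
    @[k --> \oo] --> 0.
  apply: (@squeeze_cvgr _ _ _ _ (fun=> 0)
    (fun k => n'%:R * (((a + 1) ^ (k * n'.+1 + 1))%:R / (k ^ (k * n'.+1))%:R))).
  - near=> k; rewrite mulrA -natrM; apply: normrem_redweight; last by rewrite leq_add2l.
    by near: k; exists 1%N.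
  - exact: cvg_cst.
  - by rewrite -(mulr0 n'%:R); exact: cvgMl_tmp (cvg_coef_over_base R a _ (ltn0Sn n')).
rewrite -[X in _ --> X]add0r.
apply: cvg_trans (cvgD err_cvg (cvgMr_tmp (b := (al ^+ n')^-1) (cvg_redweight j))).
by apply: near_eq_cvg; near=> k; rewrite /= subrK.
Unshelve. all: end_near.
Qed.

Lemma seq6p2_normrem k : (2 * a + 2 <= k)%N ->
  seq6p2 R a n'.+1 k = (1 + al) * normrem k (k * n'.+1 + 1) / normrem k (k * n'.+1) - 1.
Proof.
move=> k_large; have k_gt0 : (0 < k)%N by apply: leq_trans k_large; rewrite addn2.
set X := (k ^ (k * n'.+1))%N.
have intr_sum e : ((\sum_(r < n'.+1) (redcoef a n' e r)%:R * X%:R ^+ r : int)%:~R : R) =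
    \sum_(r < n'.+1) (redcoef a n' e r)%:R * X%:R ^+ r.
  by rewrite rmorph_sum; apply: eq_bigr => i _; rewrite rmorphM rmorphXn !rmorph_nat.
rewrite /seq6p2 !term6p2_redpoly // ?leq_addr // !intr_sum /normrem.
set x : R := (k ^ (k * n'.+1))%:R.
set S0 := \sum_(i < n'.+1) (redcoef a n' (k * n'.+1) i)%:R * _.
(* Both sides are linear in S0^-1, so [field] needs no [S0 != 0]. *)
rewrite invf_div; set u := S0^-1.
have x_neq0 : x != 0 by rewrite pnatr_eq0 -lt0n expn_gt0 k_gt0.
have al1_neq0 : 1 + al != 0 by rewrite gt_eqF ?addr_gt0.
by rewrite addn1 exprS; field; rewrite al1_neq0 !expf_neq0.
Qed.

Lemma cvg_seq6p2 : seq6p2 R a n'.+1 @ \oo --> al.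
Proof.
set L := n'.+1%:R^-1 / al ^+ n'.
have L_neq0 : L != 0 by rewrite mulf_neq0 ?invr_eq0 ?pnatr_eq0 ?expf_neq0 ?gt_eqF.
rewrite -[X in _ --> X](_ : (1 + al) * L * L^-1 - 1 = al); last first.
  by rewrite mulfK // [1 + al]addrC addrK.
apply: cvg_trans (cvgB (cvgM (cvgMl_tmp (a := 1 + al) (cvg_normrem 1 isT))
                             (cvgV L_neq0 (cvg_normrem 0 isT))) (cvg_cst (1 : R))).
apply: near_eq_cvg; near=> k.
rewrite /GRing.mul_fun /unstable.inv_fun !fctE addn0 seq6p2_normrem //.
by near: k; exists (2 * a + 2)%N.
Unshelve. all: end_near.
Qed.

End RootApproximation.

Theorem theorem6p2 (R : realType) (a n : nat) (ha : (1 < a)%N) (hn : (0 < n)%N) :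
  seq6p2 R a n @ \oo --> powR (a%:R : R) (n%:R^-1).
Proof.
case: n hn => [//|n'] _; have a_gt0 : 0 < a%:R :> R by rewrite ltr0n ltnW.
apply: cvg_seq6p2; first exact: ltnW.
- exact: powR_gt0.
- by rewrite -powR_mulrn ?powR_ge0 // -powRrM mulVf ?pnatr_eq0 // powRr1 ?ltW.
Qed.
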